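(* Let $0<\alpha,\beta<1$, $a\in(0,1]$ and $N$ even. The spectral projections $F_{a,1,N}(w)$ and $F_{a,2,N}(w)$ of $\phi_{a,N}(w)$ are analytic at $w=a^2$ and at $w=a^{-2}$ (i.e. have no poles there).
   Context: For $\varepsilon\in\{\alpha,\beta\}$ and $a\in(0,1]$ let $$\Phi_{\varepsilon,a}(z)=\frac{1}{(1-a^2z^{-1})^2}\begin{pmatrix}1&\frac{\varepsilon^2}{az}\\ \frac{1}{\varepsilon^2a}&1\end{pmatrix}\begin{pmatrix}1&\frac{\varepsilon^2a}{z}\\ \frac{a}{\varepsilon^2}&1\end{pmatrix}\begin{pmatrix}1&\frac{1}{az}\\ \frac1a&1\end{pmatrix}\begin{pmatrix}1&\frac az\\ a&1\end{pmatrix},$$ $\phi_{a,N}(z)=\Phi_{\alpha,a}(z)^{N/2}\Phi_{\beta,a}(z)^{N/2}$. Its eigenvalues $r_{a,1,N},r_{a,2,N}=\frac12\big(\operatorname{tr}\phi_{a,N}\pm\sqrt{(\operatorname{tr}\phi_{a,N})^2-4\det\phi_{a,N}}\big)$ are labeled so that $r_{a,1,N}$ has the pole at $w=a^2$; $F_{a,k,N}(w)=E_{a,N}(w)P_kE_{a,N}(w)^{-1}$ with $E_{a,N}$ an eigenvector matrix for this ordering, $P_1=\operatorname{diag}(1,0)$, $P_2=\operatorname{diag}(0,1)$, so $\phi_{a,N}=r_{a,1,N}F_{a,1,N}+r_{a,2,N}F_{a,2,N}$ and $F_{a,1,N}+F_{a,2,N}=I$. *)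

From Stdlib Require Import Reals Arith.
From Coquelicot Require Import Coquelicot.
Open Scope C_scope.

Record M2 := mkM2 { m11 : C; m12 : C; m21 : C; m22 : C }.

Definition M2mul (A B : M2) : M2 :=
  mkM2 (m11 A * m11 B + m12 A * m21 B) (m11 A * m12 B + m12 A * m22 B)
       (m21 A * m11 B + m22 A * m21 B) (m21 A * m12 B + m22 A * m22 B).
Definition M2scale (c : C) (A : M2) : M2 :=
  mkM2 (c * m11 A) (c * m12 A) (c * m21 A) (c * m22 A).
Definition M2id : M2 := mkM2 1 0 0 1.
Fixpoint M2pow (A : M2) (n : nat) : M2 :=
  match n with O => M2id | S k => M2mul A (M2pow A k) end.
Definition M2tr (A : M2) : C := m11 A + m22 A.
Definition M2det (A : M2) : C := m11 A * m22 A - m12 A * m21 A.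
(* inverse via the adjugate (meaningful when det A <> 0) *)
Definition M2inv (A : M2) : M2 :=
  M2scale (/ M2det A) (mkM2 (m22 A) (- m12 A) (- m21 A) (m11 A)).
Definition M2diag (x y : C) : M2 := mkM2 x 0 0 y.
Definition P1 : M2 := M2diag 1 0.
Definition P2 : M2 := M2diag 0 1.

Definition Phi (eps a : R) (z : C) : M2 :=
  let e := RtoC eps in let a' := RtoC a in
  M2scale (/ ((1 - a' ^ 2 / z) ^ 2))
    (M2mul (mkM2 1 (e ^ 2 / (a' * z)) (/ (e ^ 2 * a')) 1)
    (M2mul (mkM2 1 (e ^ 2 * a' / z) (a' / e ^ 2) 1)
    (M2mul (mkM2 1 (/ (a' * z)) (/ a') 1)
           (mkM2 1 (a' / z) a' 1)))).

Definition phi (alpha beta a : R) (N : nat) (z : C) : M2 :=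
  M2mul (M2pow (Phi alpha a z) (N / 2)) (M2pow (Phi beta a z) (N / 2)).

Definition analytic_at (f : C -> C) (w0 : C) : Prop :=
  exists (d : R) (c : nat -> C), (0 < d)%R /\
    forall w, (Cmod (w - w0) < d)%R -> is_pseries c (w - w0) (f w).

Definition M2analytic_at (F : C -> M2) (w0 : C) : Prop :=
  analytic_at (fun w => m11 (F w)) w0 /\ analytic_at (fun w => m12 (F w)) w0 /\
  analytic_at (fun w => m21 (F w)) w0 /\ analytic_at (fun w => m22 (F w)) w0.

(* (F1, F2) are the spectral projections of the matrix A, in the sense of the
   paper: A has two distinct eigenvalues r1, r2 (the roots of
   r^2 - tr A r + det A), E is an eigenvector matrix for the ordering (r1, r2),
   and F_k = E P_k E^{-1}. *)
Definition spectral_projections (A F1 F2 : M2) : Prop :=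
  exists (r1 r2 : C) (E : M2),
    r1 <> r2 /\ r1 + r2 = M2tr A /\ r1 * r2 = M2det A /\
    M2det E <> 0 /\ M2mul A E = M2mul E (M2diag r1 r2) /\
    F1 = M2mul E (M2mul P1 (M2inv E)) /\ F2 = M2mul E (M2mul P2 (M2inv E)).

(* The spectral projections of phi_{a,N} are analytic at w0 (have no pole
   there): on a punctured disc around w0 they are given by two matrix
   functions F1, F2 which are analytic at w0. *)
Definition projections_analytic_at (alpha beta a : R) (N : nat) (w0 : C) : Prop :=
  exists (d : R) (F1 F2 : C -> M2), (0 < d)%R /\
    M2analytic_at F1 w0 /\ M2analytic_at F2 w0 /\
    forall w, (0 < Cmod (w - w0) < d)%R ->
      spectral_projections (phi alpha beta a N w) (F1 w) (F2 w).

(* Phi_{eps,a}(z) is the scalar (1 - a^2/z)^-2 times a matrix polynomial in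
   y = 1/z, and nonzero scalars do not change spectral projections; so it
   suffices to treat P(w) = Phi_poly_alpha(1/w)^n Phi_poly_beta(1/w)^n, which is
   analytic near w0 = a^2 and near w0 = a^-2.  Each factor has determinant
   (1 - y/a^2)^2 (1 - a^2 y)^2, which vanishes at y = 1/w0, and has nonnegative
   entries with positive diagonal, so tr P(w0) > 0.  Hence the discriminant
   tr^2 - 4 det equals tr^2 <> 0 at w0: near w0 the eigenvalues
   r1,2 = (tr +- sqrt disc)/2 are analytic and distinct, and so are the
   projections (P - r2)/(r1 - r2) and (P - r1)/(r2 - r1).
   Analytic inverses and square roots come from solving V = U + B V + e V^2
   with power series, whose coefficients are dominated by the majorant
   L^n / n^2, stable under convolution. *)

From Stdlib Require Import Reals Lia Lra Psatz.
From Coquelicot Require Import Coquelicot.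
Open Scope C_scope.

(** * Finite sums and complex series *)

Lemma sum_n_le_loc (a b : nat -> R) n :
  (forall k, (k <= n)%nat -> a k <= b k)%R -> (sum_n a n <= sum_n b n)%R.
Proof.
  induction n as [|n IH]; intros H; [rewrite !sum_O; auto|].
  rewrite !sum_Sn; apply Rplus_le_compat; [apply IH; intros; apply H|apply H]; lia.
Qed.

Lemma sum_n_shift {G : AbelianMonoid} (a : nat -> G) n :
  sum_n a (S n) = plus (a O) (sum_n (fun k => a (S k)) n).
Proof. unfold sum_n; rewrite sum_Sn_m by lia; now rewrite sum_n_m_S. Qed.

Lemma sum_n_rev {G : AbelianMonoid} (a : nat -> G) n :
  sum_n (fun k => a (n - k)%nat) n = sum_n a n.
Proof.
  induction n as [|n IH]; [now rewrite !sum_O|].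
  rewrite sum_n_shift, sum_Sn, <- IH, plus_comm; simpl.
  f_equal; apply sum_n_ext_loc; intros k Hk; f_equal; lia.
Qed.

Lemma Cmod_sum_n (a : nat -> C) n : (Cmod (sum_n a n) <= sum_n (fun k => Cmod (a k)) n)%R.
Proof. exact (norm_sum_n_m a 0 n). Qed.

Lemma Re_sum_n (u : nat -> C) n : Re (sum_n u n) = sum_n (fun k => Re (u k)) n.
Proof.
  induction n as [|n IH]; [now rewrite !sum_O|].
  now rewrite !sum_Sn, <- IH.
Qed.

Lemma Im_sum_n (u : nat -> C) n : Im (sum_n u n) = sum_n (fun k => Im (u k)) n.
Proof.
  induction n as [|n IH]; [now rewrite !sum_O|].
  now rewrite !sum_Sn, <- IH.
Qed.

Lemma is_series_C_parts (u : nat -> C) (l : C) :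
  is_series u l <->
  is_series (fun n => Re (u n)) (Re l) /\ is_series (fun n => Im (u n)) (Im l).
Proof.
  unfold is_series; split.
  - intros H; split; apply filterlim_locally; intros eps;
      generalize (proj1 (filterlim_locally _ _) H eps); apply filter_imp;
      intros n [HRe HIm]; [rewrite <- Re_sum_n | rewrite <- Im_sum_n]; assumption.
  - intros [HRe HIm]; apply filterlim_locally; intros eps.
    generalize (filter_and _ _ (proj1 (filterlim_locally _ _) HRe eps)
                  (proj1 (filterlim_locally _ _) HIm eps)).
    apply filter_imp; intros n [BRe BIm].
    change (ball (Re l) eps (Re (sum_n u n)) /\ ball (Im l) eps (Im (sum_n u n))).
    now rewrite Re_sum_n, Im_sum_n.
Qed.

Lemma is_series_C_unique (u : nat -> C) (l1 l2 : C) :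
  is_series u l1 -> is_series u l2 -> l1 = l2.
Proof. apply filterlim_locally_unique. Qed.

Lemma is_series_finite (u : nat -> C) N :
  (forall n, (N < n)%nat -> u n = 0) -> is_series u (sum_n u N).
Proof.
  intros Hu; unfold is_series.
  apply (filterlim_ext_loc (fun _ => sum_n u N)); [|apply filterlim_const].
  exists N; intros n Hn; induction Hn as [|n Hn IH]; [reflexivity|].
  rewrite sum_Sn, <- IH, Hu by lia; symmetry; apply Cplus_0_r.
Qed.

Lemma Rabs_Im_le_Cmod (c : C) : (Rabs (Im c) <= Cmod c)%R.
Proof.
  destruct c as [x y]; unfold Cmod; simpl.
  rewrite <- sqrt_Rsqr_abs; apply sqrt_le_1_alt; unfold Rsqr; nra.
Qed.

Lemma ex_series_Cmod_parts (u : nat -> C) : ex_series (fun n => Cmod (u n)) ->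
  ex_series (fun n => Rabs (Re (u n))) /\ ex_series (fun n => Rabs (Im (u n))).
Proof.
  intros Hu; split;
    apply (@ex_series_le R_AbsRing R_CompleteNormedModule _ (fun n => Cmod (u n))); trivial;
    intros n; rewrite Rabs_Rabsolu; [apply re_le_Cmod | apply Rabs_Im_le_Cmod].
Qed.

Definition CSeries (u : nat -> C) : C :=
  (Series (fun n => Re (u n)), Series (fun n => Im (u n))).

Lemma is_series_CSeries (u : nat -> C) :
  ex_series (fun n => Cmod (u n)) -> is_series u (CSeries u).
Proof.
  intros Hu.
  destruct (@ex_series_le C_AbsRing C_CompleteNormedModule u (fun n => Cmod (u n))
              (fun n => Rle_refl _) Hu) as [l Hl].
  destruct (proj1 (is_series_C_parts u l) Hl) as [HRe HIm].
  unfold CSeries; rewrite (is_series_unique _ _ HRe), (is_series_unique _ _ HIm).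
  now destruct l.
Qed.

Definition Cconv (c d : nat -> C) (n : nat) : C := sum_n (fun k => c k * d (n - k)%nat) n.

(* Cauchy product, reduced to the real one on real and imaginary parts. *)
Lemma is_series_Cconv (u v : nat -> C) (A B : C) :
  ex_series (fun n => Cmod (u n)) -> ex_series (fun n => Cmod (v n)) ->
  is_series u A -> is_series v B -> is_series (Cconv u v) (A * B).
Proof.
  intros Hu Hv HA HB.
  destruct (ex_series_Cmod_parts u Hu) as [Ru Iu], (ex_series_Cmod_parts v Hv) as [Rv Iv].
  destruct (proj1 (is_series_C_parts _ _) HA) as [HA1 HA2].
  destruct (proj1 (is_series_C_parts _ _) HB) as [HB1 HB2].
  pose proof (is_series_mult _ _ _ _ HA1 HB1 Ru Rv) as P11.
  pose proof (is_series_mult _ _ _ _ HA2 HB2 Iu Iv) as P22.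
  pose proof (is_series_mult _ _ _ _ HA1 HB2 Ru Iv) as P12.
  pose proof (is_series_mult _ _ _ _ HA2 HB1 Iu Rv) as P21.
  apply is_series_C_parts; split.
  - eapply is_series_ext; [|apply (is_series_minus _ _ _ _ P11 P22)].
    intros n; unfold Cconv; rewrite Re_sum_n, sum_n_Reals.
    change (plus ?x (opp ?y)) with (x - y)%R; rewrite <- minus_sum.
    apply sum_eq; intros k _; reflexivity.
  - eapply is_series_ext; [|apply (is_series_plus _ _ _ _ P12 P21)].
    intros n; unfold Cconv; rewrite Im_sum_n, sum_n_Reals.
    change (plus ?x ?y) with (x + y)%R; rewrite <- plus_sum.
    apply sum_eq; intros k _; reflexivity.
Qed.

(** * Power series with a Cauchy estimate *)

Lemma is_pseries_C (c : nat -> C) (x l : C) :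
  is_pseries c x l <-> is_series (fun n => x ^ n * c n) l.
Proof. reflexivity. Qed.

Definition cauchy_bound (c : nat -> C) (r M : R) : Prop :=
  forall n, (Cmod (c n) * r ^ n <= M)%R.

Lemma cauchy_bound_nonneg c r M : cauchy_bound c r M -> (0 <= M)%R.
Proof. intros H; specialize (H O); simpl in H; pose proof (Cmod_ge_0 (c O)); lra. Qed.

Lemma cauchy_bound_le c r r' M M' :
  cauchy_bound c r M -> (0 <= r' <= r)%R -> (M <= M')%R -> cauchy_bound c r' M'.
Proof.
  intros H Hr HM n; eapply Rle_trans; [|apply HM]; eapply Rle_trans; [|apply (H n)].
  apply Rmult_le_compat_l; [apply Cmod_ge_0 | now apply pow_incr].
Qed.

Lemma ex_series_pseries_Cmod c r M x : cauchy_bound c r M -> (Cmod x < r)%R ->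
  ex_series (fun n => Cmod (x ^ n * c n)).
Proof.
  intros H Hx.
  assert (Hr : (0 < r)%R) by (pose proof (Cmod_ge_0 x); lra).
  set (q := (Cmod x / r)%R).
  assert (Hq : (0 <= q < 1)%R).
  { unfold q; split; [apply Rdiv_le_0_compat; [apply Cmod_ge_0 | lra]|].
    apply Rmult_lt_reg_r with r; [lra|]; unfold Rdiv; rewrite Rmult_assoc, Rinv_l; lra. }
  apply (@ex_series_le R_AbsRing R_CompleteNormedModule _ (fun n => M * q ^ n)%R).
  - intros n; rewrite Rabs_pos_eq by apply Cmod_ge_0.
    rewrite Cmod_mult, Cmod_pow.
    replace (Cmod x ^ n)%R with (q ^ n * r ^ n)%R
      by (unfold q; rewrite <- Rpow_mult_distr; f_equal; field; lra).
    specialize (H n); pose proof (pow_le q n (proj1 Hq)); nra.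
  - apply (ex_series_scal_l M (fun n => q ^ n)%R), ex_series_geom.
    rewrite Rabs_pos_eq; lra.
Qed.

Lemma is_pseries_Cconv c d r M1 M2 x A B :
  cauchy_bound c r M1 -> cauchy_bound d r M2 -> (Cmod x < r)%R ->
  is_pseries c x A -> is_pseries d x B -> is_pseries (Cconv c d) x (A * B).
Proof.
  intros Hc Hd Hx HA HB; apply is_pseries_C in HA, HB; apply is_pseries_C.
  eapply is_series_ext;
    [|exact (is_series_Cconv _ _ _ _ (ex_series_pseries_Cmod c r M1 x Hc Hx)
               (ex_series_pseries_Cmod d r M2 x Hd Hx) HA HB)].
  intros n; unfold Cconv; rewrite <- (sum_n_mult_l (K := C_Ring)).
  apply sum_n_ext_loc; intros k Hk; change (mult ?u ?v) with (u * v).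
  replace (x ^ n) with (x ^ k * x ^ (n - k)) by (rewrite <- Cpow_add_r; f_equal; lia).
  (* [ring] does not see through the normed-module carrier of the equation. *)
  match goal with |- ?u = ?v => change (@eq C u v) end; ring.
Qed.

Lemma succ_le_pow2 n : (INR (S n) <= 2 ^ n)%R.
Proof.
  induction n as [|n IH]; [simpl; lra|].
  change (2 ^ S n)%R with (2 * 2 ^ n)%R; rewrite !S_INR in *.
  pose proof (pos_INR n); lra.
Qed.

Lemma cauchy_bound_Cconv c d r M1 M2 : (0 < r)%R ->
  cauchy_bound c r M1 -> cauchy_bound d r M2 -> cauchy_bound (Cconv c d) (r / 2) (M1 * M2).
Proof.
  intros Hr Hc Hd n.
  assert (Hsum : (Cmod (Cconv c d n) * r ^ n <= INR (S n) * (M1 * M2))%R).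
  { rewrite <- sum_n_const; unfold Cconv.
    eapply Rle_trans; [apply Rmult_le_compat_r; [apply pow_le; lra | apply Cmod_sum_n]|].
    rewrite Rmult_comm, <- (sum_n_mult_l (K := R_Ring)); apply sum_n_le_loc; intros k Hk.
    change (mult ?u ?v) with (u * v)%R; rewrite Cmod_mult.
    replace (r ^ n)%R with (r ^ k * r ^ (n - k))%R by (rewrite <- pow_add; f_equal; lia).
    replace (r ^ k * r ^ (n - k) * (Cmod (c k) * Cmod (d (n - k)%nat)))%R
      with ((Cmod (c k) * r ^ k) * (Cmod (d (n - k)%nat) * r ^ (n - k)))%R by ring.
    apply Rmult_le_compat; auto; apply Rmult_le_pos; try apply Cmod_ge_0; apply pow_le; lra. }
  assert (HM : (0 <= M1 * M2)%R)
    by (apply Rmult_le_pos; eapply cauchy_bound_nonneg; eassumption).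
  pose proof (succ_le_pow2 n); pose proof (pow_lt 2 n).
  replace ((r / 2) ^ n)%R with (r ^ n / 2 ^ n)%R
    by (unfold Rdiv; rewrite Rpow_mult_distr, pow_inv; auto).
  apply Rmult_le_reg_r with (2 ^ n)%R; [lra|].
  unfold Rdiv; rewrite Rmult_assoc, (Rmult_assoc (r ^ n)), Rinv_l, Rmult_1_r by lra.
  nra.
Qed.

Lemma Cminus_diag (x : C) : x - x = 0.
Proof. ring. Qed.

Definition near (w0 : C) (P : C -> Prop) : Prop :=
  exists r, (0 < r)%R /\ forall w, (Cmod (w - w0) < r)%R -> P w.

Lemma near_disc w0 r : (0 < r)%R -> near w0 (fun w => Cmod (w - w0) < r)%R.
Proof. now exists r. Qed.

Lemma near_and w0 (P Q : C -> Prop) : near w0 P -> near w0 Q -> near w0 (fun w => P w /\ Q w).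
Proof.
  intros [r [Hr HP]] [s [Hs HQ]]; exists (Rmin r s); split; [now apply Rmin_glb_lt|].
  intros w Hw; split; [apply HP | apply HQ];
    eapply Rlt_le_trans; eauto; [apply Rmin_l | apply Rmin_r].
Qed.

Lemma near_impl w0 (P Q : C -> Prop) : (forall w, P w -> Q w) -> near w0 P -> near w0 Q.
Proof. intros H [r [Hr HP]]; exists r; auto. Qed.

Lemma near_center w0 (P : C -> Prop) : near w0 P -> P w0.
Proof. intros [r [Hr HP]]; apply HP; now rewrite Cminus_diag, Cmod_0. Qed.

Lemma near_punctured_avoid (w0 b : C) (Q : C -> Prop) :
  near w0 (fun w => w <> b -> Q w) ->
  exists d, (0 < d)%R /\ forall w, (0 < Cmod (w - w0) < d)%R -> Q w.
Proof.
  intros (r & Hr & HQ).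
  destruct (Ceq_dec w0 b) as [<-|Hb].
  - exists r; split; [exact Hr|]; intros w Hw; apply HQ; [lra|].
    intros ->; rewrite Cminus_diag, Cmod_0 in Hw; lra.
  - assert (Hd : (0 < Cmod (w0 - b))%R) by (apply Cmod_gt_0; intros H; apply Hb, Ceq_minus, H).
    exists (Rmin r (Cmod (w0 - b))); split; [now apply Rmin_glb_lt|]; intros w Hw.
    pose proof (Rmin_l r (Cmod (w0 - b))); pose proof (Rmin_r r (Cmod (w0 - b))).
    apply HQ; [lra|]; intros ->.
    rewrite <- Copp_minus_distr, Cmod_opp in Hw; lra.
Qed.

(* The Cauchy estimate on the coefficients is what closure under products needs. *)
Definition cauchy_analytic (f : C -> C) (w0 : C) : Prop :=
  exists c r M, (0 < r)%R /\ cauchy_bound c r M /\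
    near w0 (fun w => is_pseries c (w - w0) (f w)).

Lemma cauchy_analytic_analytic_at f w0 : cauchy_analytic f w0 -> analytic_at f w0.
Proof. intros (c & _ & _ & _ & _ & d & Hd & H); now exists d, c. Qed.

Lemma is_pseries_center_value (c : nat -> C) w0 (f : C -> C) :
  near w0 (fun w => is_pseries c (w - w0) (f w)) -> f w0 = c O.
Proof.
  intros H; apply near_center in H; rewrite Cminus_diag in H.
  exact (is_series_C_unique _ _ _ H (is_pseries_0 c)).
Qed.

Lemma cauchy_analytic_ext f g w0 :
  cauchy_analytic f w0 -> near w0 (fun w => f w = g w) -> cauchy_analytic g w0.
Proof.
  intros (c & r & M & Hr & Hc & Hf) Hfg; exists c, r, M; repeat split; auto.
  eapply near_impl; [|exact (near_and _ _ _ Hf Hfg)]; intros w [H E]; now rewrite <- E.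
Qed.

Lemma cauchy_analytic_const (k : C) w0 : cauchy_analytic (fun _ => k) w0.
Proof.
  exists (fun n => match n with O => k | _ => 0 end), 1%R, (Cmod k).
  split; [lra|split].
  - intros [|n]; rewrite pow1, Rmult_1_r; [lra|rewrite Cmod_0; apply Cmod_ge_0].
  - exists 1%R; split; [lra|]; intros w _; apply is_pseries_C.
    assert (Hfin := is_series_finite (fun n => (w - w0) ^ n * match n with O => k | _ => 0 end) 0
                   ltac:(intros [|n] Hn; [lia | simpl; ring])).
    rewrite sum_O in Hfin; simpl in Hfin; now rewrite Cmult_1_l in Hfin.
Qed.

Lemma cauchy_analytic_id w0 : cauchy_analytic (fun w => w) w0.
Proof.
  exists (fun n => match n with O => w0 | 1%nat => 1 | _ => 0 end), 1%R, (Cmod w0 + 1)%R.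
  pose proof (Cmod_ge_0 w0); split; [lra|split].
  - intros [|[|n]]; rewrite pow1, Rmult_1_r; [lra | rewrite Cmod_1; lra | rewrite Cmod_0; lra].
  - exists 1%R; split; [lra|]; intros w _; apply is_pseries_C.
    assert (Hfin := is_series_finite
                   (fun n => (w - w0) ^ n * match n with O => w0 | 1%nat => 1 | _ => 0 end) 1
                   ltac:(intros [|[|n]] Hn; [lia | lia | simpl; ring])).
    rewrite sum_Sn, sum_O in Hfin; simpl in Hfin.
    replace (plus (1 * w0) ((w - w0) * 1 * 1)) with w in Hfin
      by (change (plus ?u ?v) with (u + v); ring).
    exact Hfin.
Qed.

Lemma cauchy_analytic_plus f g w0 :
  cauchy_analytic f w0 -> cauchy_analytic g w0 -> cauchy_analytic (fun w => f w + g w) w0.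
Proof.
  intros (c & r & M & Hr & Hc & Hf) (d & s & N & Hs & Hd & Hg).
  set (t := Rmin r s); assert (Ht : (0 < t)%R) by now apply Rmin_glb_lt.
  exists (fun n => c n + d n), t, (M + N)%R; split; [exact Ht|split].
  - intros n; eapply Rle_trans;
      [apply Rmult_le_compat_r; [apply pow_le; lra | apply Cmod_triangle]|].
    rewrite Rmult_plus_distr_r; apply Rplus_le_compat;
      [apply (cauchy_bound_le c r _ M) | apply (cauchy_bound_le d s _ N)]; auto;
      try split; try lra; [apply Rmin_l | apply Rmin_r].
  - eapply near_impl; [|exact (near_and _ _ _ Hf Hg)]; intros w [Pf Pg].
    exact (is_pseries_plus _ _ _ _ _ Pf Pg).
Qed.

Lemma cauchy_analytic_scal (k : C) f w0 :
  cauchy_analytic f w0 -> cauchy_analytic (fun w => k * f w) w0.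
Proof.
  intros (c & r & M & Hr & Hc & Hf); exists (fun n => k * c n), r, (Cmod k * M)%R.
  split; [exact Hr|split].
  - intros n; rewrite Cmod_mult, Rmult_assoc; apply Rmult_le_compat_l; [apply Cmod_ge_0 | apply Hc].
  - eapply near_impl; [|exact Hf]; intros w Pf.
    apply (is_pseries_scal k _ _ _ (Cmult_comm _ _) Pf).
Qed.

Lemma cauchy_analytic_minus f g w0 :
  cauchy_analytic f w0 -> cauchy_analytic g w0 -> cauchy_analytic (fun w => f w - g w) w0.
Proof.
  intros Hf Hg; eapply cauchy_analytic_ext;
    [exact (cauchy_analytic_plus _ _ _ Hf (cauchy_analytic_scal (- (1)) _ _ Hg))|].
  exists 1%R; split; [lra|]; intros w _; ring.
Qed.

Lemma cauchy_analytic_mult f g w0 :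
  cauchy_analytic f w0 -> cauchy_analytic g w0 -> cauchy_analytic (fun w => f w * g w) w0.
Proof.
  intros (c & r1 & M1 & Hr1 & Hc & Hf) (d & r2 & M2 & Hr2 & Hd & Hg).
  set (r := Rmin r1 r2); assert (Hr : (0 < r)%R) by now apply Rmin_glb_lt.
  assert (Hc' : cauchy_bound c r M1)
    by (apply (cauchy_bound_le c r1 _ M1); [exact Hc | split; [lra | apply Rmin_l] | lra]).
  assert (Hd' : cauchy_bound d r M2)
    by (apply (cauchy_bound_le d r2 _ M2); [exact Hd | split; [lra | apply Rmin_r] | lra]).
  exists (Cconv c d), (r / 2)%R, (M1 * M2)%R; split; [lra|split].
  - now apply cauchy_bound_Cconv.
  - eapply near_impl; [|exact (near_and _ _ _ (near_disc w0 r Hr) (near_and _ _ _ Hf Hg))].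
    intros w (Hw & Pf & Pg); exact (is_pseries_Cconv c d r M1 M2 _ _ _ Hc' Hd' Hw Pf Pg).
Qed.

(** * Analytic solutions of [V = U + B V + e V^2] *)

(* [inv_sq 0 = 0] because [/ 0 = 0] in Rocq; this kills the boundary terms of
   the convolutions below. *)
Definition inv_sq (n : nat) : R := / (INR n ^ 2).

Lemma inv_sq_0 : inv_sq 0 = 0%R.
Proof. unfold inv_sq; simpl; rewrite Rmult_0_l; apply Rinv_0. Qed.

Lemma inv_sq_nonneg n : (0 <= inv_sq n)%R.
Proof.
  destruct n; [rewrite inv_sq_0; lra|].
  left; apply Rinv_0_lt_compat, pow_lt, lt_0_INR; lia.
Qed.

Lemma inv_sq_le_1 n : (inv_sq n <= 1)%R.
Proof.
  destruct n; [rewrite inv_sq_0; lra|].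
  unfold inv_sq; rewrite <- Rinv_1; apply Rinv_le_contravar; [lra|].
  assert (1 <= INR (S n))%R by (apply (le_INR 1); lia); nra.
Qed.

Lemma sum_inv_sq_le n : (sum_n inv_sq (S n) <= 2 - / INR (S n))%R.
Proof.
  induction n as [|n IH].
  - rewrite sum_Sn, sum_O, inv_sq_0; unfold inv_sq; simpl.
    change (plus ?u ?v) with (u + v)%R; rewrite Rmult_1_r, Rinv_1; lra.
  - rewrite sum_Sn; change (plus ?u ?v) with (u + v)%R.
    assert (Hx : (1 <= INR (S n))%R) by (apply (le_INR 1); lia).
    unfold inv_sq at 2; rewrite (S_INR (S n)) in *; set (x := INR (S n)) in *.
    assert (/ (x + 1) ^ 2 <= / x - / (x + 1))%R.
    { replace (/ x - / (x + 1))%R with (/ (x * (x + 1)))%R by (field; lra).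
      apply Rinv_le_contravar; nra. }
    lra.
Qed.

Lemma sum_inv_sq_le_2 n : (sum_n inv_sq n <= 2)%R.
Proof.
  destruct n; [rewrite sum_O, inv_sq_0; lra|].
  pose proof (sum_inv_sq_le n).
  pose proof (Rinv_0_lt_compat (INR (S n)) (lt_0_INR _ (Nat.lt_0_succ n))); lra.
Qed.

Lemma inv_sq_mul_le k n : (k <= n)%nat ->
  (inv_sq k * inv_sq (n - k) <= 2 * inv_sq n * (inv_sq k + inv_sq (n - k)))%R.
Proof.
  intros Hk.
  assert (Hpos : (0 <= 2 * inv_sq n * (inv_sq k + inv_sq (n - k)))%R).
  { pose proof (inv_sq_nonneg n); pose proof (inv_sq_nonneg k).
    pose proof (inv_sq_nonneg (n - k)); nra. }
  destruct (Nat.eq_dec k 0) as [->|Hk0]; [rewrite inv_sq_0 in *; rewrite Rmult_0_l; exact Hpos|].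
  destruct (Nat.eq_dec k n) as [->|Hkn];
    [rewrite Nat.sub_diag, inv_sq_0 in *; rewrite Rmult_0_r; exact Hpos|].
  assert (Ha : (0 < INR k)%R) by (apply lt_0_INR; lia).
  assert (Hb : (0 < INR (n - k))%R) by (apply lt_0_INR; lia).
  unfold inv_sq.
  replace (INR n) with (INR k + INR (n - k))%R by (rewrite <- plus_INR; f_equal; lia).
  set (a := INR k) in *; set (b := INR (n - k)) in *.
  replace (/ a ^ 2 * / b ^ 2)%R with ((a + b) ^ 2 * / (a ^ 2 * b ^ 2 * (a + b) ^ 2))%R
    by (field; lra).
  replace (2 * / (a + b) ^ 2 * (/ a ^ 2 + / b ^ 2))%R
    with (2 * (a ^ 2 + b ^ 2) * / (a ^ 2 * b ^ 2 * (a + b) ^ 2))%R by (field; lra).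
  apply Rmult_le_compat_r;
    [left; apply Rinv_0_lt_compat, Rmult_lt_0_compat; [apply Rmult_lt_0_compat|];
     apply pow_lt; lra|].
  pose proof (pow2_ge_0 (a - b)); lra.
Qed.

Definition weight (L : R) (n : nat) : R := L ^ n * inv_sq n.

Lemma weight_nonneg L n : (0 <= L)%R -> (0 <= weight L n)%R.
Proof. intros; apply Rmult_le_pos; [now apply pow_le | apply inv_sq_nonneg]. Qed.

Lemma weight_conv L n : (0 <= L)%R ->
  (sum_n (fun k => weight L k * weight L (n - k)) n <= 8 * weight L n)%R.
Proof.
  intros HL; unfold weight.
  eapply Rle_trans.
  { apply sum_n_le_loc; intros k Hk.
    replace (L ^ k * inv_sq k * (L ^ (n - k) * inv_sq (n - k)))%R
      with (L ^ n * (inv_sq k * inv_sq (n - k)))%R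
      by (replace n with (k + (n - k))%nat at 1 by lia; rewrite pow_add; ring).
    apply Rmult_le_compat_l; [now apply pow_le | now apply inv_sq_mul_le]. }
  rewrite (sum_n_mult_l (K := R_Ring) (L ^ n)%R
             (fun k => 2 * inv_sq n * (inv_sq k + inv_sq (n - k))))%R.
  change (mult ?u ?v) with (u * v)%R.
  rewrite (sum_n_mult_l (K := R_Ring) (2 * inv_sq n)%R (fun k => inv_sq k + inv_sq (n - k)))%R.
  change (mult ?u ?v) with (u * v)%R.
  rewrite (sum_n_plus (G := R_AbelianMonoid)), (sum_n_rev inv_sq).
  change (plus ?u ?v) with (u + v)%R.
  pose proof (sum_inv_sq_le_2 n); pose proof (weight_nonneg L n HL); unfold weight in *.
  nra.
Qed.

Lemma Cmod_Cconv_weight (c d : nat -> C) L (x y : R) n :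
  (0 <= L)%R -> (0 <= x)%R -> (0 <= y)%R ->
  (forall k, Cmod (c k) <= x * weight L k)%R -> (forall k, Cmod (d k) <= y * weight L k)%R ->
  (Cmod (Cconv c d n) <= 8 * (x * y) * weight L n)%R.
Proof.
  intros HL Hx Hy Hc Hd; unfold Cconv.
  eapply Rle_trans; [apply Cmod_sum_n|].
  eapply Rle_trans.
  { apply (sum_n_le_loc _ (fun k => x * y * (weight L k * weight L (n - k)))%R); intros k _.
    rewrite Cmod_mult.
    replace (x * y * (weight L k * weight L (n - k)))%R
      with ((x * weight L k) * (y * weight L (n - k)))%R by ring.
    apply Rmult_le_compat; auto; apply Cmod_ge_0. }
  rewrite (sum_n_mult_l (K := R_Ring)); change (mult ?u ?v) with (u * v)%R.
  replace (8 * (x * y) * weight L n)%R with (x * y * (8 * weight L n))%R by ring.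
  apply Rmult_le_compat_l; [now apply Rmult_le_pos | now apply weight_conv].
Qed.

Section QuadraticRecursion.

Variables (u b : nat -> C) (e : C).

(* Coefficients of a solution of [V = U + B V + e V^2]: each coefficient only
   depends on the previous ones when [u 0 = b 0 = v 0 = 0], so the Picard
   iterates of [quad_step] stabilise coefficientwise. *)
Definition quad_step (v : nat -> C) (n : nat) : C := u n + Cconv b v n + e * Cconv v v n.

Definition quad_iter (k : nat) : nat -> C := Nat.iter k quad_step (fun _ => 0).

Definition quad_coef (n : nat) : C := quad_iter (S n) n.

Hypotheses (u_0 : u O = 0) (b_0 : b O = 0).

Lemma quad_step_local (v v' : nat -> C) n : v O = 0 -> v' O = 0 ->
  (forall j, (j < n)%nat -> v j = v' j) -> quad_step v n = quad_step v' n.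
Proof.
  intros v_0 v'_0 Hvv'; unfold quad_step, Cconv; f_equal; [f_equal|f_equal];
    apply sum_n_ext_loc; intros k Hk.
  - destruct k as [|k]; [now rewrite b_0, !Cmult_0_l|].
    rewrite Hvv' by lia; reflexivity.
  - destruct (Nat.eq_dec k 0) as [->|Hk0]; [now rewrite v_0, v'_0, !Cmult_0_l|].
    destruct (Nat.eq_dec k n) as [->|Hkn];
      [now rewrite Nat.sub_diag, v_0, v'_0, !Cmult_0_r|].
    rewrite !Hvv' by lia; reflexivity.
Qed.

Lemma quad_iter_0 k : quad_iter k O = 0.
Proof.
  induction k as [|k IH]; [reflexivity|].
  change (quad_step (quad_iter k) O = 0); unfold quad_step, Cconv.
  rewrite !sum_O, Nat.sub_diag, u_0, b_0, IH; ring.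
Qed.

Lemma quad_iter_stable m k j : (j < m)%nat -> quad_iter (k + m) j = quad_iter m j.
Proof.
  revert j; induction m as [|m IH]; intros j Hj; [lia|].
  rewrite Nat.add_succ_r.
  change (quad_step (quad_iter (k + m)) j = quad_step (quad_iter m) j).
  apply quad_step_local; [apply quad_iter_0 | apply quad_iter_0 |].
  intros i Hi; apply IH; lia.
Qed.

Lemma quad_coef_fixed n : quad_coef n = quad_step quad_coef n.
Proof.
  change (quad_step (quad_iter n) n = quad_step quad_coef n).
  apply quad_step_local; [apply quad_iter_0 | apply quad_iter_0 |].
  intros j Hj; unfold quad_coef.
  replace n with (n - S j + S j)%nat at 1 by lia; apply quad_iter_stable; lia.
Qed.
Section Bounds.

Variable L : R.
Hypotheses (HL : (0 <= L)%R)
  (Hu : forall n, (Cmod (u n) <= / 64 * weight L n)%R)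
  (Hb : forall n, (Cmod (b n) <= / 64 * weight L n)%R)
  (He : (Cmod e <= 1)%R).

Lemma quad_step_bound (v : nat -> C) :
  (forall n, Cmod (v n) <= / 16 * weight L n)%R ->
  forall n, (Cmod (quad_step v n) <= / 16 * weight L n)%R.
Proof.
  intros Hv n; unfold quad_step.
  pose proof (Cmod_Cconv_weight b v L (/ 64) (/ 16) n HL ltac:(lra) ltac:(lra) Hb Hv).
  pose proof (Cmod_Cconv_weight v v L (/ 16) (/ 16) n HL ltac:(lra) ltac:(lra) Hv Hv).
  pose proof (Hu n); pose proof (weight_nonneg L n HL).
  assert (Cmod e * Cmod (Cconv v v n) <= 8 * (/ 16 * / 16) * weight L n)%R.
  { rewrite <- (Rmult_1_l (8 * _ * _)%R).
    apply Rmult_le_compat; auto; apply Cmod_ge_0. }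
  eapply Rle_trans; [apply Cmod_triangle|]; rewrite Cmod_mult.
  eapply Rle_trans; [apply Rplus_le_compat; [apply Cmod_triangle | apply Rle_refl]|].
  lra.
Qed.

Lemma quad_coef_bound n : (Cmod (quad_coef n) <= / 16 * weight L n)%R.
Proof.
  enough (H : forall k m, (Cmod (quad_iter k m) <= / 16 * weight L m)%R) by apply H.
  induction k as [|k IH]; intros m.
  - unfold quad_iter; simpl; rewrite Cmod_0; pose proof (weight_nonneg L m HL); lra.
  - exact (quad_step_bound (quad_iter k) IH m).
Qed.

End Bounds.

End QuadraticRecursion.

Lemma sq_le_pow3 n : (INR n ^ 2 <= 3 ^ n)%R.
Proof.
  induction n as [|n IH]; [simpl; lra|]; destruct n as [|n]; [simpl; lra|].
  rewrite S_INR; change (3 ^ S (S n))%R with (3 * 3 ^ S n)%R.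
  assert (3 <= 3 ^ S n)%R by (simpl; pose proof (pow_R1_Rle 3 n ltac:(lra)); lra).
  pose proof (pow2_ge_0 (INR (S n) - 1)); nra.
Qed.

(* [3^n] absorbs the factor [n^2] of the weight, [(64 M + 1)^n] the constant [64 M]. *)
Lemma weight_of_cauchy_bound (c : nat -> C) r M : (0 < r)%R -> cauchy_bound c r M -> c O = 0 ->
  forall n, (Cmod (c n) <= / 64 * weight (3 * (64 * M + 1) / r) n)%R.
Proof.
  intros Hr HM c_0 [|n]; [rewrite c_0, Cmod_0; unfold weight; rewrite inv_sq_0; lra|].
  pose proof (cauchy_bound_nonneg _ _ _ HM) as M_ge0.
  set (A := (64 * M + 1)%R); set (m := S n).
  assert (Hrm : (0 < r ^ m)%R) by (apply pow_lt; lra).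
  assert (Hm : (0 < INR m)%R) by (apply lt_0_INR; unfold m; lia).
  assert (Hm2 : (0 < INR m ^ 2)%R) by (apply pow_lt; lra).
  assert (Hcm : (Cmod (c m) * r ^ m <= M)%R) by apply HM.
  assert (HA : (A <= A ^ m)%R).
  { unfold m; simpl; rewrite <- (Rmult_1_r A) at 1.
    apply Rmult_le_compat_l; [unfold A; lra | apply pow_R1_Rle; unfold A; lra]. }
  pose proof (sq_le_pow3 m); pose proof (pow_le 3 m ltac:(lra)).
  unfold weight, inv_sq, Rdiv; rewrite !Rpow_mult_distr, pow_inv.
  apply Rmult_le_reg_r with (r ^ m * INR m ^ 2)%R; [nra|].
  replace (/ 64 * (3 ^ m * A ^ m * / r ^ m * / INR m ^ 2) * (r ^ m * INR m ^ 2))%R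
    with (/ 64 * (3 ^ m * A ^ m))%R by (field; lra).
  unfold A in *; nra.
Qed.

Lemma quad_coef_cauchy_bound (u b : nat -> C) (e : C) r M :
  (0 < r)%R -> cauchy_bound u r M -> cauchy_bound b r M -> u O = 0 -> b O = 0 -> (Cmod e <= 1)%R ->
  exists s, (0 < s)%R /\ cauchy_bound (quad_coef u b e) s (/ 16).
Proof.
  intros Hr Hu Hb u_0 b_0 He.
  set (L := (3 * (64 * M + 1) / r)%R).
  assert (HL : (0 < L)%R).
  { pose proof (cauchy_bound_nonneg _ _ _ Hu); unfold L, Rdiv.
    apply Rmult_lt_0_compat; [lra | now apply Rinv_0_lt_compat]. }
  exists (/ L)%R; split; [now apply Rinv_0_lt_compat|]; intros n.
  pose proof (quad_coef_bound u b e L ltac:(lra) (weight_of_cauchy_bound u r M Hr Hu u_0)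
                (weight_of_cauchy_bound b r M Hr Hb b_0) He n) as Hn.
  unfold weight in Hn; pose proof (inv_sq_le_1 n); pose proof (inv_sq_nonneg n).
  assert (E : (L ^ n * (/ L) ^ n = 1)%R) by (rewrite <- Rpow_mult_distr, Rinv_r, pow1; lra).
  assert (0 < (/ L) ^ n)%R by (apply pow_lt, Rinv_0_lt_compat; lra).
  apply Rle_trans with (/ 16 * (L ^ n * (/ L) ^ n) * inv_sq n)%R; [|rewrite E; lra].
  replace (/ 16 * (L ^ n * (/ L) ^ n) * inv_sq n)%R
    with (/ 16 * (L ^ n * inv_sq n) * (/ L) ^ n)%R by ring.
  apply Rmult_le_compat_r; lra.
Qed.

Lemma cauchy_analytic_quadratic (U B : C -> C) (e : C) w0 :
  cauchy_analytic U w0 -> cauchy_analytic B w0 -> U w0 = 0 -> B w0 = 0 -> (Cmod e <= 1)%R ->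
  exists V, cauchy_analytic V w0 /\ V w0 = 0 /\
    near w0 (fun w => V w = U w + B w * V w + e * (V w * V w)).
Proof.
  intros (u & r1 & M1 & Hr1 & Hu & HU) (b & r2 & M2 & Hr2 & Hb & HB) U_0 B_0 He.
  rewrite (is_pseries_center_value _ _ _ HU) in U_0.
  rewrite (is_pseries_center_value _ _ _ HB) in B_0.
  set (r := Rmin r1 r2); assert (Hr : (0 < r)%R) by now apply Rmin_glb_lt.
  pose proof (cauchy_bound_nonneg _ _ _ Hu); pose proof (cauchy_bound_nonneg _ _ _ Hb).
  assert (Hu' : cauchy_bound u r (M1 + M2))
    by (apply (cauchy_bound_le u r1 _ M1); [exact Hu | split; [lra | apply Rmin_l] | lra]).
  assert (Hb' : cauchy_bound b r (M1 + M2))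
    by (apply (cauchy_bound_le b r2 _ M2); [exact Hb | split; [lra | apply Rmin_r] | lra]).
  destruct (quad_coef_cauchy_bound u b e r _ Hr Hu' Hb' U_0 B_0 He) as (s & Hs & Hv).
  set (v := quad_coef u b e) in Hv.
  set (V := fun w => CSeries (fun n => (w - w0) ^ n * v n)).
  assert (HV : near w0 (fun w => is_pseries v (w - w0) (V w))).
  { exists s; split; [exact Hs|]; intros w Hw; apply is_pseries_C, is_series_CSeries.
    exact (ex_series_pseries_Cmod v s _ _ Hv Hw). }
  exists V; split; [now exists v, s, (/ 16)%R|split].
  - rewrite (is_pseries_center_value _ _ _ HV); now apply quad_iter_0.
  - set (t := Rmin r s); assert (Ht : (0 < t)%R) by now apply Rmin_glb_lt.
    assert (Hbt : cauchy_bound b t (M1 + M2))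
      by (apply (cauchy_bound_le b r _ (M1 + M2)); [exact Hb' | split; [lra | apply Rmin_l] | lra]).
    assert (Hvt : cauchy_bound v t (/ 16))
      by (apply (cauchy_bound_le v s _ (/ 16)); [exact Hv | split; [lra | apply Rmin_r] | lra]).
    eapply near_impl;
      [|exact (near_and _ _ _ (near_disc w0 t Ht) (near_and _ _ _ HU (near_and _ _ _ HB HV)))].
    intros w (Hw & PU & PB & PV).
    pose proof (is_pseries_Cconv b v t _ _ _ _ _ Hbt Hvt Hw PB PV) as PBV.
    pose proof (is_pseries_Cconv v v t _ _ _ _ _ Hvt Hvt Hw PV PV) as PVV.
    apply (is_series_C_unique _ _ _ PV).
    apply (is_pseries_ext (fun n => u n + Cconv b v n + e * Cconv v v n));
      [intros n; symmetry; now apply quad_coef_fixed|].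
    exact (is_pseries_plus _ _ _ _ _ (is_pseries_plus _ _ _ _ _ PU PBV)
             (is_pseries_scal e _ _ _ (Cmult_comm _ _) PVV)).
Qed.

(* [V = U + U V] with [U = 1 - g / g(w0)] gives [(1 + V) g = g(w0)]. *)
Lemma cauchy_analytic_inv (g : C -> C) w0 : cauchy_analytic g w0 -> g w0 <> 0 ->
  exists h, cauchy_analytic h w0 /\ near w0 (fun w => h w * g w = 1).
Proof.
  intros Hg Hg0; set (U := fun w => 1 + - / g w0 * g w).
  assert (HU : cauchy_analytic U w0)
    by exact (cauchy_analytic_plus _ _ _ (cauchy_analytic_const 1 w0)
                (cauchy_analytic_scal _ _ _ Hg)).
  assert (U_0 : U w0 = 0) by (unfold U; now field).
  destruct (cauchy_analytic_quadratic U U 0 w0 HU HU U_0 U_0 ltac:(rewrite Cmod_0; lra))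
    as (V & HV & _ & Heq).
  exists (fun w => / g w0 * (1 + V w)); split.
  - exact (cauchy_analytic_scal _ _ _ (cauchy_analytic_plus _ _ _ (cauchy_analytic_const 1 w0) HV)).
  - eapply near_impl; [|exact Heq]; intros w Hw.
    replace (g w) with (g w0 * (1 - U w)) by (unfold U; now field).
    transitivity (1 + (V w - (U w + U w * V w + 0 * (V w * V w)))); [field; auto|].
    rewrite <- Hw; ring.
Qed.

Lemma cauchy_analytic_Cinv (w0 : C) : w0 <> 0 -> cauchy_analytic (fun w => / w) w0.
Proof.
  intros Hw0; destruct (cauchy_analytic_inv _ w0 (cauchy_analytic_id w0) Hw0) as (h & Hh & Hhw).
  apply (cauchy_analytic_ext h); [exact Hh|].
  eapply near_impl; [|exact Hhw]; intros w E.
  assert (Hw : w <> 0) by (intros ->; rewrite Cmult_0_r in E; injection E; lra).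
  replace (h w) with (h w * w * / w) by (field; exact Hw); rewrite E; ring.
Qed.

(* [V = U - V^2 / 2] with [U = (g / s0^2 - 1) / 2] gives [(1 + V)^2 = g / s0^2]. *)
Lemma cauchy_analytic_sqrt (g : C -> C) w0 (s0 : C) :
  cauchy_analytic g w0 -> g w0 = s0 * s0 -> s0 <> 0 ->
  exists S, cauchy_analytic S w0 /\ S w0 = s0 /\ near w0 (fun w => S w * S w = g w).
Proof.
  intros Hg Hg0 Hs0; set (U := fun w => / 2 * (- (1) + / (s0 * s0) * g w)).
  assert (HU : cauchy_analytic U w0)
    by exact (cauchy_analytic_scal _ _ _ (cauchy_analytic_plus _ _ _ (cauchy_analytic_const _ w0)
                                            (cauchy_analytic_scal _ _ _ Hg))).
  assert (U_0 : U w0 = 0) by (unfold U; rewrite Hg0; now field).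
  assert (He : (Cmod (- / 2) <= 1)%R).
  { rewrite Cmod_opp, Cmod_inv by (intros H; injection H; lra).
    rewrite Cmod_R, Rabs_pos_eq by lra; lra. }
  destruct (cauchy_analytic_quadratic U (fun _ => 0) (- / 2) w0 HU (cauchy_analytic_const 0 w0) U_0
              eq_refl He) as (V & HV & V_0 & Heq).
  exists (fun w => s0 * (1 + V w)); split; [|split].
  - exact (cauchy_analytic_scal _ _ _ (cauchy_analytic_plus _ _ _ (cauchy_analytic_const 1 w0) HV)).
  - rewrite V_0; ring.
  - eapply near_impl; [|exact Heq]; intros w Hw.
    replace (g w) with (s0 * s0 * (1 + 2 * U w)) by (unfold U; now field).
    assert (E : U w = V w + / 2 * (V w * V w)) by (rewrite Hw at 1; field).
    rewrite E; field.
Qed.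

(** * Spectral projections of 2x2 matrices *)

Lemma M2_ext (A B : M2) :
  m11 A = m11 B -> m12 A = m12 B -> m21 A = m21 B -> m22 A = m22 B -> A = B.
Proof. destruct A, B; simpl; intros; subst; reflexivity. Qed.

Lemma M2mul_scale s t A B : M2mul (M2scale s A) (M2scale t B) = M2scale (s * t) (M2mul A B).
Proof. apply M2_ext; simpl; ring. Qed.

Lemma M2pow_scale s A n : M2pow (M2scale s A) n = M2scale (s ^ n) (M2pow A n).
Proof.
  induction n as [|n IH]; simpl; [apply M2_ext; simpl; ring|].
  now rewrite IH, M2mul_scale.
Qed.

Lemma M2det_mul A B : M2det (M2mul A B) = M2det A * M2det B.
Proof. unfold M2det; simpl; ring. Qed.

Lemma M2det_pow A n : M2det (M2pow A n) = M2det A ^ n.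
Proof.
  induction n as [|n IH]; simpl; [unfold M2det; simpl; ring|].
  now rewrite M2det_mul, IH.
Qed.

Definition M2shift (A : M2) (r : C) : M2 := mkM2 (m11 A - r) (m12 A) (m21 A) (m22 A - r).

Lemma Cinv_neq_0 (x : C) : x <> 0 -> / x <> 0.
Proof.
  intros Hx H; apply Hx.
  replace x with (x * x * / x) by (field; exact Hx); rewrite H; ring.
Qed.

Lemma Cmult_integral (x y : C) : x * y = 0 -> x = 0 \/ y = 0.
Proof.
  intros H; destruct (Ceq_dec x 0) as [Hx|Hx]; [now left|right].
  replace y with (/ x * (x * y)) by (field; exact Hx); rewrite H; ring.
Qed.

Lemma spectral_projections_scale (c : C) (A F1 F2 : M2) : c <> 0 ->
  spectral_projections A F1 F2 -> spectral_projections (M2scale c A) F1 F2.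
Proof.
  intros Hc (r1 & r2 & E & Hr & Htr & Hdet & HE & HAE & HF1 & HF2).
  exists (c * r1), (c * r2), E; repeat split; auto.
  - intros H; apply Hr; replace r1 with (/ c * (c * r1)) by (field; exact Hc).
    rewrite H; field; exact Hc.
  - unfold M2tr in *; simpl.
    replace (c * r1 + c * r2) with (c * (r1 + r2)) by ring; rewrite Htr; ring.
  - unfold M2det in *; simpl.
    replace (c * r1 * (c * r2)) with (c * c * (r1 * r2)) by ring; rewrite Hdet; ring.
  - replace (M2mul (M2scale c A) E) with (M2scale c (M2mul A E)) by (apply M2_ext; simpl; ring).
    rewrite HAE; apply M2_ext; simpl; ring.
Qed.

(* The eigenvector matrix depends on whether [A] is triangular. *)
Lemma spectral_projections_of_roots (A : M2) (r1 r2 : C) :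
  r1 <> r2 -> r1 + r2 = M2tr A -> r1 * r2 = M2det A ->
  spectral_projections A (M2scale (/ (r1 - r2)) (M2shift A r2))
    (M2scale (/ (r2 - r1)) (M2shift A r1)).
Proof.
  intros Hr Htr Hdet.
  assert (H12 : r1 - r2 <> 0) by (intros H; apply Hr, Ceq_minus, H).
  assert (H21 : r2 - r1 <> 0) by (intros H; apply Hr; symmetry; apply Ceq_minus, H).
  destruct A as [p q s t]; unfold M2tr, M2det in *; simpl in *.
  replace t with (r1 + r2 - p) in * by (rewrite Htr; ring); clear Htr.
  exists r1, r2.
  destruct (Ceq_dec q 0) as [->|Hq].
  - assert (Hp : (p - r1) * (p - r2) = 0)
      by (transitivity (r1 * r2 - (p * (r1 + r2 - p) - 0 * s)); [ring | rewrite Hdet; ring]).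
    destruct (Cmult_integral _ _ Hp) as [Hp1|Hp2];
      [apply Ceq_minus in Hp1 | apply Ceq_minus in Hp2]; subst p.
    + exists (mkM2 (r1 - r2) 0 s 1); repeat split; auto;
        try (apply M2_ext; unfold M2inv, M2det; simpl; field; auto);
        unfold M2tr, M2det; simpl; try ring.
      intros H; apply H12; rewrite <- H; ring.
    + exists (mkM2 0 (r2 - r1) 1 s); repeat split; auto;
        try (apply M2_ext; unfold M2inv, M2det; simpl; field; auto);
        unfold M2tr, M2det; simpl; try ring.
      intros H; apply H12; rewrite <- H; ring.
  - exists (mkM2 q q (r1 - p) (r2 - p)).
    assert (HdetE : q * (r2 - p) - q * (r1 - p) <> 0).
    { replace (q * (r2 - p) - q * (r1 - p)) with (q * (r2 - r1)) by ring.
      now apply Cmult_neq_0. }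
    replace s with ((p * (r1 + r2 - p) - r1 * r2) / q) by (rewrite Hdet; field; exact Hq).
    repeat split; auto; try (apply M2_ext; unfold M2inv, M2det; simpl; field; auto);
      unfold M2tr, M2det; simpl; field; auto.
Qed.

Definition M2cauchy_analytic (F : C -> M2) (w0 : C) : Prop :=
  cauchy_analytic (fun w => m11 (F w)) w0 /\ cauchy_analytic (fun w => m12 (F w)) w0 /\
  cauchy_analytic (fun w => m21 (F w)) w0 /\ cauchy_analytic (fun w => m22 (F w)) w0.

Lemma M2cauchy_analytic_analytic_at F w0 : M2cauchy_analytic F w0 -> M2analytic_at F w0.
Proof.
  intros (H11 & H12 & H21 & H22); split; [|split; [|split]];
    now apply cauchy_analytic_analytic_at.
Qed.

Lemma M2cauchy_analytic_const (A : M2) w0 : M2cauchy_analytic (fun _ => A) w0.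
Proof. split; [|split; [|split]]; apply cauchy_analytic_const. Qed.

Lemma M2cauchy_analytic_mul F G w0 : M2cauchy_analytic F w0 -> M2cauchy_analytic G w0 ->
  M2cauchy_analytic (fun w => M2mul (F w) (G w)) w0.
Proof.
  intros (F11 & F12 & F21 & F22) (G11 & G12 & G21 & G22);
    split; [|split; [|split]]; apply cauchy_analytic_plus; now apply cauchy_analytic_mult.
Qed.

Lemma M2cauchy_analytic_pow F n w0 : M2cauchy_analytic F w0 ->
  M2cauchy_analytic (fun w => M2pow (F w) n) w0.
Proof.
  intros HF; induction n as [|n IH];
    [exact (M2cauchy_analytic_const M2id w0) | exact (M2cauchy_analytic_mul _ _ _ HF IH)].
Qed.

Lemma M2cauchy_analytic_scale_shift (k r : C -> C) F w0 :
  cauchy_analytic k w0 -> cauchy_analytic r w0 -> M2cauchy_analytic F w0 ->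
  M2cauchy_analytic (fun w => M2scale (k w) (M2shift (F w) (r w))) w0.
Proof.
  intros Hk Hr (F11 & F12 & F21 & F22);
    split; [|split; [|split]]; apply cauchy_analytic_mult; auto; now apply cauchy_analytic_minus.
Qed.

Lemma spectral_projections_analytic (P : C -> M2) w0 (s0 : C) :
  M2cauchy_analytic P w0 ->
  M2tr (P w0) * M2tr (P w0) - 4 * M2det (P w0) = s0 * s0 -> s0 <> 0 ->
  exists F1 F2, M2cauchy_analytic F1 w0 /\ M2cauchy_analytic F2 w0 /\
    near w0 (fun w => spectral_projections (P w) (F1 w) (F2 w)).
Proof.
  intros HP Hdisc Hs0; pose proof HP as (P11 & P12 & P21 & P22).
  set (t := fun w => M2tr (P w)).
  assert (Ht : cauchy_analytic t w0) by now apply cauchy_analytic_plus.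
  assert (Hdet : cauchy_analytic (fun w => M2det (P w)) w0)
    by (apply cauchy_analytic_minus; now apply cauchy_analytic_mult).
  assert (HD : cauchy_analytic (fun w => t w * t w - 4 * M2det (P w)) w0)
    by (apply cauchy_analytic_minus;
        [now apply cauchy_analytic_mult | now apply cauchy_analytic_scal]).
  destruct (cauchy_analytic_sqrt _ _ s0 HD Hdisc Hs0) as (S & HS & S_0 & HS2).
  destruct (cauchy_analytic_inv S w0 HS ltac:(now rewrite S_0)) as (h & Hh & HhS).
  set (r1 := fun w => / 2 * (t w + S w)); set (r2 := fun w => / 2 * (t w - S w)).
  assert (Hr1 : cauchy_analytic r1 w0) by (apply cauchy_analytic_scal, cauchy_analytic_plus; auto).
  assert (Hr2 : cauchy_analytic r2 w0) by (apply cauchy_analytic_scal, cauchy_analytic_minus; auto).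
  exists (fun w => M2scale (h w) (M2shift (P w) (r2 w))),
         (fun w => M2scale (- (1) * h w) (M2shift (P w) (r1 w))).
  split; [|split]; [now apply M2cauchy_analytic_scale_shift | |].
  { apply M2cauchy_analytic_scale_shift; auto; now apply cauchy_analytic_scal. }
  eapply near_impl; [|exact (near_and _ _ _ HS2 HhS)]; intros w [ES EhS].
  assert (HSw : S w <> 0) by (intros H; rewrite H, Cmult_0_r in EhS; injection EhS; lra).
  assert (E12 : r1 w - r2 w = S w) by (unfold r1, r2; field).
  assert (Eh : h w = / (r1 w - r2 w))
    by (rewrite E12; replace (h w) with (h w * S w * / S w) by (field; exact HSw);
        rewrite EhS; ring).
  replace (- (1) * h w) with (/ (r2 w - r1 w))
    by (rewrite Eh, <- Copp_minus_distr; field; now rewrite E12).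
  rewrite Eh; apply spectral_projections_of_roots.
  - intros H; apply HSw; rewrite <- E12, H; ring.
  - unfold r1, r2, t; field.
  - transitivity (/ 4 * (t w * t w - S w * S w)); [unfold r1, r2; field|].
    rewrite ES; field.
Qed.

(** * The transfer matrices [Phi] and [phi] *)

Definition M2nonneg_posdiag (A : M2) : Prop :=
  exists p q s t : R, A = mkM2 p q s t /\ (0 < p /\ 0 <= q /\ 0 <= s /\ 0 < t)%R.

Lemma M2nonneg_posdiag_mul A B :
  M2nonneg_posdiag A -> M2nonneg_posdiag B -> M2nonneg_posdiag (M2mul A B).
Proof.
  intros (p & q & s & t & -> & Hp & Hq & Hs & Ht) (p' & q' & s' & t' & -> & Hp' & Hq' & Hs' & Ht').
  exists (p * p' + q * s')%R, (p * q' + q * t')%R, (s * p' + t * s')%R, (s * q' + t * t')%R.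
  split; [apply M2_ext; simpl; now rewrite RtoC_plus, !RtoC_mult|]; repeat split; nra.
Qed.

Lemma M2nonneg_posdiag_pow A n : M2nonneg_posdiag A -> M2nonneg_posdiag (M2pow A n).
Proof.
  intros HA; induction n as [|n IH]; [|now apply M2nonneg_posdiag_mul].
  exists 1%R, 0%R, 0%R, 1%R; split; [reflexivity | lra].
Qed.

Lemma M2tr_nonneg_posdiag A : M2nonneg_posdiag A -> M2tr A <> 0.
Proof.
  intros (p & q & s & t & -> & Hp & _ & _ & Ht); unfold M2tr; simpl.
  rewrite <- RtoC_plus; intros H; injection H; lra.
Qed.

(* The four factors of [Phi e a z] without the scalar [(1 - a^2/z)^-2],
   written in [y = 1/z]. *)
Definition Phi_poly (e a : R) (y : C) : M2 :=
  M2mul (mkM2 1 (RtoC (e ^ 2 / a) * y) (RtoC (/ (e ^ 2 * a))) 1)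
 (M2mul (mkM2 1 (RtoC (e ^ 2 * a) * y) (RtoC (a / e ^ 2)) 1)
 (M2mul (mkM2 1 (RtoC (/ a) * y) (RtoC (/ a)) 1)
        (mkM2 1 (RtoC a * y) (RtoC a) 1))).

Definition phi_poly (alpha beta a : R) (n : nat) (y : C) : M2 :=
  M2mul (M2pow (Phi_poly alpha a y) n) (M2pow (Phi_poly beta a y) n).

Lemma Phi_eq_scale (e a : R) (w : C) : e <> 0%R -> a <> 0%R -> w <> 0 ->
  Phi e a w = M2scale (/ ((1 - RtoC a ^ 2 / w) ^ 2)) (Phi_poly e a (/ w)).
Proof.
  intros He Ha Hw; unfold Phi, Phi_poly.
  assert (Hec : RtoC e <> 0) by (intros H; apply He; now injection H).
  assert (Hac : RtoC a <> 0) by (intros H; apply Ha; now injection H).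
  assert (He2 : (e ^ 2 <> 0)%R) by now apply pow_nonzero.
  assert (Hea : (e ^ 2 * a <> 0)%R) by now apply Rmult_integral_contrapositive_currified.
  replace (RtoC (e ^ 2 / a)) with (RtoC e ^ 2 / RtoC a) by (rewrite RtoC_div, RtoC_pow; auto).
  replace (RtoC (/ (e ^ 2 * a))) with (/ (RtoC e ^ 2 * RtoC a))
    by (rewrite RtoC_inv, RtoC_mult, RtoC_pow; auto).
  replace (RtoC (e ^ 2 * a)) with (RtoC e ^ 2 * RtoC a) by (rewrite RtoC_mult, RtoC_pow; auto).
  replace (RtoC (a / e ^ 2)) with (RtoC a / RtoC e ^ 2) by (rewrite RtoC_div, RtoC_pow; auto).
  replace (RtoC (/ a)) with (/ RtoC a) by (rewrite RtoC_inv; auto).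
  f_equal.
  replace (RtoC e ^ 2 / (RtoC a * w)) with (RtoC e ^ 2 / RtoC a * / w) by (field; auto).
  replace (/ (RtoC a * w)) with (/ RtoC a * / w) by (field; auto).
  reflexivity.
Qed.

Lemma phi_eq_scale (alpha beta a : R) N (w : C) :
  alpha <> 0%R -> beta <> 0%R -> a <> 0%R -> w <> 0 ->
  phi alpha beta a N w =
  M2scale ((/ ((1 - RtoC a ^ 2 / w) ^ 2)) ^ (N / 2) * (/ ((1 - RtoC a ^ 2 / w) ^ 2)) ^ (N / 2))
    (phi_poly alpha beta a (N / 2) (/ w)).
Proof.
  intros Hal Hbe Ha Hw; unfold phi, phi_poly.
  now rewrite !Phi_eq_scale, !M2pow_scale, M2mul_scale.
Qed.

Lemma M2det_Phi_poly (e a : R) (y : C) : e <> 0%R -> a <> 0%R ->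
  M2det (Phi_poly e a y) = (1 - RtoC (/ a ^ 2) * y) ^ 2 * (1 - RtoC (a ^ 2) * y) ^ 2.
Proof.
  intros He Ha; unfold Phi_poly; rewrite !M2det_mul; unfold M2det; cbn [m11 m12 m21 m22].
  assert (E : forall k k' : R, RtoC k * y * RtoC k' = RtoC (k * k') * y)
    by (intros k k'; rewrite RtoC_mult; ring).
  rewrite !E.
  replace (e ^ 2 / a * / (e ^ 2 * a))%R with (/ a ^ 2)%R by (field; auto).
  replace (e ^ 2 * a * (a / e ^ 2))%R with (a ^ 2)%R by (field; auto).
  replace (/ a * / a)%R with (/ a ^ 2)%R by (field; auto).
  replace (a * a)%R with (a ^ 2)%R by ring.
  ring.
Qed.

Lemma M2det_phi_poly_root (alpha beta a x0 : R) n :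
  alpha <> 0%R -> beta <> 0%R -> a <> 0%R -> (1 <= n)%nat -> (x0 = a ^ 2 \/ x0 = / a ^ 2)%R ->
  M2det (phi_poly alpha beta a n (/ RtoC x0)) = 0.
Proof.
  intros Hal Hbe Ha Hn Hx0; unfold phi_poly.
  rewrite M2det_mul, !M2det_pow, !M2det_Phi_poly by assumption.
  assert (Ha2 : RtoC (a ^ 2) <> 0) by (intros H; apply (pow_nonzero a 2 Ha); now injection H).
  assert (Z : (1 - RtoC (/ a ^ 2) * / RtoC x0) * (1 - RtoC (a ^ 2) * / RtoC x0) = 0).
  { destruct Hx0 as [-> | ->]; [|rewrite RtoC_inv by now apply pow_nonzero]; field; exact Ha2. }
  replace ((1 - RtoC (/ a ^ 2) * / RtoC x0) ^ 2 * (1 - RtoC (a ^ 2) * / RtoC x0) ^ 2)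
    with (((1 - RtoC (/ a ^ 2) * / RtoC x0) * (1 - RtoC (a ^ 2) * / RtoC x0)) ^ 2) by ring.
  rewrite Z; destruct n as [|n]; [lia | simpl; ring].
Qed.

Lemma M2tr_phi_poly_neq0 (alpha beta a x : R) n :
  (0 < alpha)%R -> (0 < beta)%R -> (0 < a)%R -> (0 < x)%R ->
  M2tr (phi_poly alpha beta a n (/ RtoC x)) <> 0.
Proof.
  intros Hal Hbe Ha Hx.
  assert (Hfactor : forall k k' : R, (0 < k)%R -> (0 < k')%R ->
             M2nonneg_posdiag (mkM2 1 (RtoC k * / RtoC x) (RtoC k') 1)).
  { intros k k' Hk Hk'; exists 1%R, (k / x)%R, k', 1%R; split.
    - rewrite RtoC_div by lra; reflexivity.
    - repeat split; try lra; apply Rdiv_le_0_compat; lra. }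
  assert (HPhi : forall e, (0 < e)%R -> M2nonneg_posdiag (Phi_poly e a (/ RtoC x))).
  { intros e He; unfold Phi_poly.
    assert (He2 : (0 < e ^ 2)%R) by now apply pow_lt.
    apply M2nonneg_posdiag_mul; [|apply M2nonneg_posdiag_mul; [|apply M2nonneg_posdiag_mul]];
      apply Hfactor; unfold Rdiv; repeat apply Rmult_lt_0_compat;
      try apply Rinv_0_lt_compat; try apply Rmult_lt_0_compat; auto; lra. }
  apply M2tr_nonneg_posdiag; unfold phi_poly.
  apply M2nonneg_posdiag_mul; apply M2nonneg_posdiag_pow; now apply HPhi.
Qed.

Lemma M2cauchy_analytic_Phi_poly (e a : R) (y : C -> C) w0 :
  cauchy_analytic y w0 -> M2cauchy_analytic (fun w => Phi_poly e a (y w)) w0.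
Proof.
  intros Hy.
  assert (Hfactor : forall k k' : R,
             M2cauchy_analytic (fun w => mkM2 1 (RtoC k * y w) (RtoC k') 1) w0)
    by (intros k k'; split; [|split; [|split]]; cbn [m11 m12 m21 m22];
        [apply cauchy_analytic_const | exact (cauchy_analytic_scal _ _ _ Hy)
        | apply cauchy_analytic_const | apply cauchy_analytic_const]).
  unfold Phi_poly.
  apply M2cauchy_analytic_mul; [|apply M2cauchy_analytic_mul; [|apply M2cauchy_analytic_mul]];
    apply Hfactor.
Qed.

Lemma pos_of_root (a x0 : R) : (0 < a)%R -> (x0 = a ^ 2 \/ x0 = / a ^ 2)%R -> (0 < x0)%R.
Proof. intros Ha [-> | ->]; [|apply Rinv_0_lt_compat]; now apply pow_lt. Qed.

Lemma phi_poly_projections_analytic (alpha beta a x0 : R) n :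
  (0 < alpha)%R -> (0 < beta)%R -> (0 < a)%R -> (1 <= n)%nat -> (x0 = a ^ 2 \/ x0 = / a ^ 2)%R ->
  exists F1 F2, M2cauchy_analytic F1 (RtoC x0) /\ M2cauchy_analytic F2 (RtoC x0) /\
    near (RtoC x0) (fun w => spectral_projections (phi_poly alpha beta a n (/ w)) (F1 w) (F2 w)).
Proof.
  intros Hal Hbe Ha Hn Hx0.
  pose proof (pos_of_root a x0 Ha Hx0) as Hx.
  assert (Hw0 : RtoC x0 <> 0) by (intros H; injection H; lra).
  set (P := fun w => phi_poly alpha beta a n (/ w)).
  assert (HPhi : forall e, M2cauchy_analytic (fun w => M2pow (Phi_poly e a (/ w)) n) (RtoC x0))
    by (intros e; apply M2cauchy_analytic_pow, M2cauchy_analytic_Phi_poly,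
          cauchy_analytic_Cinv, Hw0).
  assert (HP : M2cauchy_analytic P (RtoC x0))
    by exact (M2cauchy_analytic_mul _ _ _ (HPhi alpha) (HPhi beta)).
  apply (spectral_projections_analytic P _ (M2tr (P (RtoC x0))) HP).
  - unfold P; rewrite (M2det_phi_poly_root alpha beta a x0 n) by (auto; lra); ring.
  - unfold P; exact (M2tr_phi_poly_neq0 alpha beta a x0 n Hal Hbe Ha Hx).
Qed.

Lemma near_spectral_projections_phi (alpha beta a x0 : R) N (F1 F2 : C -> M2) :
  (0 < alpha)%R -> (0 < beta)%R -> (0 < a)%R -> (0 < x0)%R ->
  near (RtoC x0) (fun w =>
    spectral_projections (phi_poly alpha beta a (N / 2) (/ w)) (F1 w) (F2 w)) ->
  near (RtoC x0) (fun w => w <> RtoC a ^ 2 ->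
    spectral_projections (phi alpha beta a N w) (F1 w) (F2 w)).
Proof.
  intros Hal Hbe Ha Hx Hspec.
  eapply near_impl; [|exact (near_and _ _ _ Hspec (near_disc _ x0 Hx))].
  intros w [Hs Hw] Hwa.
  assert (Hw0 : w <> 0).
  { intros ->; replace (0 - RtoC x0) with (- RtoC x0) in Hw by ring.
    rewrite Cmod_opp, Cmod_R, Rabs_pos_eq in Hw by lra; lra. }
  assert (Hden : 1 - RtoC a ^ 2 / w <> 0).
  { intros H; apply Hwa.
    replace w with (w * (1 - RtoC a ^ 2 / w) + RtoC a ^ 2) by (field; exact Hw0).
    rewrite H; ring. }
  rewrite phi_eq_scale by (auto; lra).
  apply spectral_projections_scale; [|exact Hs].
  apply Cmult_neq_0; apply Cpow_nz, Cinv_neq_0, Cpow_nz, Hden.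
Qed.

Lemma projections_analytic_at_root (alpha beta a x0 : R) N :
  (0 < alpha)%R -> (0 < beta)%R -> (0 < a)%R -> (1 <= N / 2)%nat ->
  (x0 = a ^ 2 \/ x0 = / a ^ 2)%R ->
  projections_analytic_at alpha beta a N (RtoC x0).
Proof.
  intros Hal Hbe Ha HN Hx0.
  destruct (phi_poly_projections_analytic alpha beta a x0 (N / 2) Hal Hbe Ha HN Hx0)
    as (F1 & F2 & HF1 & HF2 & Hspec).
  apply (near_spectral_projections_phi alpha beta a x0 N F1 F2 Hal Hbe Ha
           (pos_of_root a x0 Ha Hx0)), near_punctured_avoid in Hspec.
  destruct Hspec as (d & Hd & Hphi); exists d, F1, F2.
  split; [exact Hd|]; split; [|split]; [now apply M2cauchy_analytic_analytic_at
                                       | now apply M2cauchy_analytic_analytic_at |].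
  exact Hphi.
Qed.

Theorem lemma5p2 (alpha beta a : R) (N : nat) :
  (0 < alpha < 1)%R -> (0 < beta < 1)%R -> (0 < a <= 1)%R ->
  Nat.Even N -> (0 < N)%nat ->
  projections_analytic_at alpha beta a N (RtoC (a ^ 2)) /\
  projections_analytic_at alpha beta a N (RtoC (/ a ^ 2)).
Proof.
  intros Hal Hbe Ha [m ->] HN.
  assert (Hm : (1 <= 2 * m / 2)%nat) by (rewrite Nat.mul_comm, Nat.div_mul; lia).
  split; apply projections_analytic_at_root; auto; lra.
Qed.
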